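(* In the setting of the Saint-Venant–Exner fluctuations below, assume additionally that $q_b(h,0)=0$, $h_b(h,0)=0$, and $\partial q_b/\partial h(h,0)=\partial q_b/\partial(hv)(h,0)=0$ for all $h>0$. Let $\mathbf{u}_L,\mathbf{u}_R$ be two lake-at-rest states, i.e. $(hv)_L=(hv)_R=0$ and $h_L+b_L=h_R+b_R$, with $h_L,h_R>0$. Let $\tilde{\mathbf{u}}=\big(\{\!\{h\}\!\},\;\frac{\sqrt{h_L}v_L+\sqrt{h_R}v_R}{\sqrt{h_L}+\sqrt{h_R}},\;\{\!\{b\}\!\}\big)$ (here the middle entry is the averaged velocity, so the momentum of $\tilde{\mathbf{u}}$ is $\{\!\{h\}\!\}$ times it), $\mathbf{A}_{roe}=\mathbf{A}(\tilde{\mathbf{u}})$, and $\mathbf{Q}_{roe}=\frac12\mathbf{R}|\boldsymbol{\Lambda}|\mathbf{R}^{-1}$ where $\mathbf{A}_{roe}=\mathbf{R}\boldsymbol{\Lambda}\mathbf{R}^{-1}$ is an eigendecomposition and $|\boldsymbol{\Lambda}|=\mathrm{diag}(|\lambda_1|,|\lambda_2|,|\lambda_3|)$. Then $\mathbf{A}_{roe}$ is diagonalizable with real eigenvalues, $\mathbf{D}^\pm(\mathbf{u}_L,\mathbf{u}_R)=0$, and $\mathbf{Q}_{roe}(\mathbf{u}_R-\mathbf{u}_L)=0$; in particular $[\![\mathbf{w}]\!]^T\mathbf{Q}_{roe}[\![\mathbf{u}]\!]=0$ and, for any $\alpha\in[0,1]$, the fluctuations $\mathbf{D}^\pm\pm(\alpha\mathbf{Q}_{llf}+(1-\alpha)\mathbf{Q}_{roe})[\![\mathbf{u}]\!]$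 with $\alpha=0$ vanish.
   Context: Saint-Venant–Exner setting: state $\mathbf{u}=(h,hv,b)^T$, $h>0$, $v=hv/h$, constants $g>0$, $r>0$, $C^1$ sediment discharge $q_b=q_b(h,hv)$ and $h_b=h_b(h,hv)$ with $q_b=v\,h_b$. $\mathbf{f}(\mathbf{u})=(hv,hv^2,q_b)^T$; $\mathbf{B}(\mathbf{u})$ is the $3\times3$ matrix whose only nonzero row is the second, equal to $(g(h+h_b),\,0,\,g(h+\tfrac1r h_b))$; generalized Jacobian $\mathbf{A}=\mathbf{f}_{\mathbf{u}}+\mathbf{B}=\begin{pmatrix}0&1&0\\ g(h+h_b)-v^2&2v&g(h+\frac1r h_b)\\ \partial q_b/\partial h&\partial q_b/\partial(hv)&0\end{pmatrix}$; auxiliary variables $\mathbf{z}(\mathbf{u})=(h,h_b,b)^T$; entropy variables $\mathbf{w}=(r(g(h+b)-\tfrac{v^2}{2}),\,rv,\,g(rh+b))^T$. Notation $[\![a]\!]=a_R-a_L$, $\{\!\{a\}\!\}=\tfrac12(a_L+a_R)$. The EC fluctuations are $\mathbf{D}^-(\mathbf{u}_L,\mathbf{u}_R)=\tfrac12\mathbf{B}(\mathbf{u}_L)[\![\mathbf{z}]\!]+\mathbf{f}^*-\mathbf{f}(\mathbf{u}_L)$ and $\mathbf{D}^+(\mathbf{u}_L,\mathbf{u}_R)=\tfrac12\mathbf{B}(\mathbf{u}_R)[\![\mathbf{z}]\!]+\mathbf{f}(\mathbf{u}_R)-\mathbf{f}^*$ with $\mathbf{f}^*=(\{\!\{hv\}\!\},\{\!\{hv\}\!\}\{\!\{v\}\!\},\{\!\{q_b\}\!\})^T$.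 $\mathbf{Q}_{llf}=\frac12\lambda_{\max}\mathbf{I}$ with a scalar $\lambda_{\max}\ge0$. *)

From HB Require Import structures.
From mathcomp Require Import all_boot all_order all_algebra.
From mathcomp Require Import all_classical all_reals all_analysis.
Set Implicit Arguments. Unset Strict Implicit. Unset Printing Implicit Defensive.
Import Order.TTheory GRing.Theory Num.Theory.
Import numFieldNormedType.Exports.
Local Open Scope ring_scope.

Section SVE.
Variable R : realType.

Definition mx3 (a11 a12 a13 a21 a22 a23 a31 a32 a33 : R) : 'M[R]_3 :=
  \matrix_(i < 3, j < 3)
    nth 0 (nth [::] [:: [:: a11; a12; a13]; [:: a21; a22; a23]; [:: a31; a32; a33]] i) j.

Definition col3 (a1 a2 a3 : R) : 'cV[R]_3 := \col_(i < 3) nth 0 [:: a1; a2; a3] i.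

(* state u = (h, hv, b); m stands for hv. Velocity v = hv / h. *)
Definition vel (h m : R) : R := m / h.

Definition d_dh (F : R -> R -> R) (h m : R) : R := derive1 (fun x => F x m) h.
Definition d_dm (F : R -> R -> R) (h m : R) : R := derive1 (fun y => F h y) m.

Definition C1_phys (F : R -> R -> R) : Prop :=
  forall h m, 0 < h ->
    [/\ derivable (fun x => F x m) h 1, derivable (fun y => F h y) m 1,
        {for (h, m), continuous (fun p : R * R => d_dh F p.1 p.2)} &
        {for (h, m), continuous (fun p : R * R => d_dm F p.1 p.2)}].

Definition avg (aL aR : R) : R := (aL + aR) / 2.

Definition fvec (qb : R -> R -> R) (h m b : R) : 'cV[R]_3 :=
  col3 m (m * vel h m) (qb h m).

Definition Bmat (g r : R) (hb : R -> R -> R) (h m b : R) : 'M[R]_3 :=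
  mx3 0 0 0
      (g * (h + hb h m)) 0 (g * (h + hb h m / r))
      0 0 0.

Definition zvec (hb : R -> R -> R) (h m b : R) : 'cV[R]_3 := col3 h (hb h m) b.

Definition wvec (g r : R) (h m b : R) : 'cV[R]_3 :=
  col3 (r * (g * (h + b) - vel h m ^+ 2 / 2)) (r * vel h m) (g * (r * h + b)).

Definition ucol (h m b : R) : 'cV[R]_3 := col3 h m b.

Definition fstar (qb : R -> R -> R) (hL mL bL hR mR bR : R) : 'cV[R]_3 :=
  col3 (avg mL mR) (avg mL mR * avg (vel hL mL) (vel hR mR)) (avg (qb hL mL) (qb hR mR)).

Definition Dminus g r qb hb (hL mL bL hR mR bR : R) : 'cV[R]_3 :=
  (1/2) *: (Bmat g r hb hL mL bL *m (zvec hb hR mR bR - zvec hb hL mL bL))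
  + fstar qb hL mL bL hR mR bR - fvec qb hL mL bL.

Definition Dplus g r qb hb (hL mL bL hR mR bR : R) : 'cV[R]_3 :=
  (1/2) *: (Bmat g r hb hR mR bR *m (zvec hb hR mR bR - zvec hb hL mL bL))
  + fvec qb hR mR bR - fstar qb hL mL bL hR mR bR.

(* generalized Jacobian A(u) = f_u + B *)
Definition Amat (g r : R) (qb hb : R -> R -> R) (h m b : R) : 'M[R]_3 :=
  mx3 0 1 0
      (g * (h + hb h m) - vel h m ^+ 2) (2 * vel h m) (g * (h + hb h m / r))
      (d_dh qb h m) (d_dm qb h m) 0.

Definition roe_v (hL mL hR mR : R) : R :=
  (Num.sqrt hL * vel hL mL + Num.sqrt hR * vel hR mR) / (Num.sqrt hL + Num.sqrt hR).

Definition Aroe g r qb hb (hL mL bL hR mR bR : R) : 'M[R]_3 :=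
  Amat g r qb hb (avg hL hR) (avg hL hR * roe_v hL mL hR mR) (avg bL bR).

Definition Qroe_of (Rm : 'M[R]_3) (d : 'rV[R]_3) : 'M[R]_3 :=
  (1/2) *: (Rm *m diag_mx (map_mx Num.norm d) *m invmx Rm).

Definition Qllf (lam : R) : 'M[R]_3 := (lam / 2)%:M.

End SVE.

(** At a lake at rest the velocity vanishes, so every sediment term drops out
    and the Roe matrix reduces to the shallow-water block
    [[0,1,0],[gH,0,gH],[0,0,0]] with [H] the mean depth, whose eigenvalues are
    [sqrt(gH), -sqrt(gH), 0].  The jump [(dh, 0, -dh)] of a lake at rest lies in
    its kernel, and the kernel of [R Λ R^-1] coincides with that of
    [R |Λ| R^-1], so the Roe dissipation annihilates the jump; the fluctuations
    vanish because their only nonzero entry is proportional to [dh + db = 0]. *)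

From HB Require Import structures.
From mathcomp Require Import all_boot all_order all_algebra.
From mathcomp Require Import all_classical all_reals all_analysis.
From mathcomp Require Import ring lra.
Set Implicit Arguments. Unset Strict Implicit. Unset Printing Implicit Defensive.
Import Order.TTheory GRing.Theory Num.Theory.
Local Open Scope ring_scope.

Ltac mx3_entrywise := apply/matrixP; move=> [[|[|[|?]]] ?] [[|[|[|?]]] ?] //;
  rewrite ?(mxE, big_ord_recl, big_ord0) /=.

Lemma mulmx_diag_norm_eq0 (F : numFieldType) n (P : 'M[F]_n) (d : 'rV[F]_n)
    (x : 'cV[F]_n) :
  P \in unitmx -> P *m diag_mx d *m invmx P *m x = 0 ->
  P *m diag_mx (map_mx Num.norm d) *m invmx P *m x = 0.
Proof.
move=> Punit Ax0; set y := invmx P *m x.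
have dy0 : diag_mx d *m y = 0.
  have : P *m (diag_mx d *m y) = 0 by rewrite /y !mulmxA.
  by move=> /(congr1 (mulmx (invmx P))); rewrite mulKmx // mulmx0.
rewrite -!mulmxA -/y; suff -> : diag_mx (map_mx Num.norm d) *m y = 0 by rewrite mulmx0.
apply/matrixP=> i j; move/matrixP: dy0 => /(_ i j).
rewrite !mul_diag_mx !mxE => /eqP; rewrite mulf_eq0 => /orP[] /eqP ->.
- by rewrite normr0 mul0r.
- by rewrite mulr0.
Qed.

Section ShallowWaterBlock.
Variable R : realType.

Definition lake_mx (a : R) : 'M[R]_3 := mx3 0 1 0 a 0 a 0 0 0.

Lemma lake_mx_jump (a dh : R) : lake_mx a *m col3 dh 0 (- dh) = 0.
Proof. by rewrite /lake_mx /mx3 /col3; mx3_entrywise; ring. Qed.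

(* Eigenvectors (1, c, 0), (1, -c, 0), (1, 0, -1) for the eigenvalues c, -c, 0,
   where c^2 = a. *)
Lemma lake_mx_diagonalizable (a : R) : 0 < a ->
  exists (P : 'M[R]_3) (d : 'rV[R]_3),
    P \in unitmx /\ lake_mx a = P *m diag_mx d *m invmx P.
Proof.
move=> a_gt0; set c := Num.sqrt a.
have c_neq0 : c != 0 by rewrite gt_eqF // sqrtr_gt0.
have cc : c * c = a by rewrite -expr2 sqr_sqrtr // ltW.
set P := mx3 1 1 1 c (- c) 0 0 0 (-1).
set Pi := mx3 (1/2) (1/(2*c)) (1/2) (1/2) (-1/(2*c)) (1/2) 0 0 (-1).
have PPi : P *m Pi = 1%:M by rewrite /P /Pi /mx3; mx3_entrywise; field; rewrite ?c_neq0.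
have [Punit _] := mulmx1_unit PPi.
have invP : invmx P = Pi by rewrite -[LHS]mulmx1 -PPi mulmxA mulVmx // mul1mx.
exists P, (\row_j nth 0 [:: c; - c; 0] j); split=> //.
rewrite invP /lake_mx /P /Pi /mx3; mx3_entrywise; rewrite ?mulr0 ?mul0r.
all: rewrite ?mulr1n -?cc; try done; try (field; by rewrite ?c_neq0).
Qed.

End ShallowWaterBlock.

Section LakeAtRest.
Variables (R : realType) (g r : R) (qb hb : R -> R -> R).
Hypothesis qb_still : forall h : R, 0 < h -> qb h 0 = 0.
Hypothesis hb_still : forall h : R, 0 < h -> hb h 0 = 0.
Hypothesis dqb_still : forall h : R, 0 < h -> d_dh qb h 0 = 0 /\ d_dm qb h 0 = 0.
Variables hL bL hR bR : R.
Hypotheses (hL_gt0 : 0 < hL) (hR_gt0 : 0 < hR) (lake : hL + bL = hR + bR).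

Lemma vel_still (h : R) : vel h 0 = 0.
Proof. exact: mul0r. Qed.

Lemma Aroe_lake :
  Aroe g r qb hb hL 0 bL hR 0 bR = lake_mx (g * avg hL hR).
Proof.
have H_gt0 : 0 < avg hL hR by rewrite /avg divr_gt0 ?addr_gt0.
have [dh0 dm0] := dqb_still H_gt0.
rewrite /Aroe /roe_v !vel_still !mulr0 add0r mul0r mulr0 /Amat vel_still.
by rewrite (hb_still H_gt0) dh0 dm0 expr0n /= subr0 mulr0 addr0 mul0r addr0.
Qed.

Lemma ucol_lake_jump :
  ucol hR 0 bR - ucol hL 0 bL = col3 (hR - hL) 0 (- (hR - hL)).
Proof.
have -> : - (hR - hL) = bR - bL by move: lake; lra.
by rewrite /ucol; mx3_entrywise; rewrite ?subrr.
Qed.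

Lemma Dminus_lake : Dminus g r qb hb hL 0 bL hR 0 bR = 0.
Proof.
have db : bR - bL = - (hR - hL) by move: lake; lra.
rewrite /Dminus /Bmat /zvec /fstar /fvec !hb_still // !qb_still // !vel_still /avg.
rewrite /mx3 /col3; mx3_entrywise; rewrite ?mulr0 ?mul0r; try ring.
by rewrite db; ring.
Qed.

Lemma Dplus_lake : Dplus g r qb hb hL 0 bL hR 0 bR = 0.
Proof.
have db : bR - bL = - (hR - hL) by move: lake; lra.
rewrite /Dplus /Bmat /zvec /fstar /fvec !hb_still // !qb_still // !vel_still /avg.
rewrite /mx3 /col3; mx3_entrywise; rewrite ?mulr0 ?mul0r; try ring.
by rewrite db; ring.
Qed.

Lemma Aroe_lake_jump :
  Aroe g r qb hb hL 0 bL hR 0 bR *m (ucol hR 0 bR - ucol hL 0 bL) = 0.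
Proof. by rewrite Aroe_lake ucol_lake_jump lake_mx_jump. Qed.

End LakeAtRest.

Theorem mainTheorem11 (R : realType) (g r : R) (qb hb : R -> R -> R)
    (hL mL bL hR mR bR lam : R) :
  0 < g -> 0 < r -> C1_phys qb -> C1_phys hb ->
  (forall h m, 0 < h -> qb h m = vel h m * hb h m) ->
  (forall h : R, 0 < h -> qb h 0 = 0) ->
  (forall h : R, 0 < h -> hb h 0 = 0) ->
  (forall h, 0 < h -> d_dh qb h 0 = 0 /\ d_dm qb h 0 = 0) ->
  0 < hL -> 0 < hR -> mL = 0 -> mR = 0 -> hL + bL = hR + bR -> 0 <= lam ->
  let A := Aroe g r qb hb hL mL bL hR mR bR in
  let du := ucol hR mR bR - ucol hL mL bL in
  let dw := wvec g r hR mR bR - wvec g r hL mL bL in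
  let Dm := Dminus g r qb hb hL mL bL hR mR bR in
  let Dp := Dplus g r qb hb hL mL bL hR mR bR in
  (exists (Rm : 'M[R]_3) (d : 'rV[R]_3),
      Rm \in unitmx /\ A = Rm *m diag_mx d *m invmx Rm)
  /\ Dm = 0 /\ Dp = 0
  /\ (forall (Rm : 'M[R]_3) (d : 'rV[R]_3),
        Rm \in unitmx -> A = Rm *m diag_mx d *m invmx Rm ->
        let Q := Qroe_of Rm d in
        [/\ Q *m du = 0,
            dw^T *m Q *m du = 0 &
            forall alpha : R, alpha = 0 ->
              let Qa := alpha *: Qllf lam + (1 - alpha) *: Q in
              Dm + Qa *m du = 0 /\ Dp - Qa *m du = 0]).
Proof.
move=> g_gt0 _ _ _ _ qb0 hb0 dqb0 hL_gt0 hR_gt0 -> -> lake _ A du dw Dm Dp.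
have Dm0 : Dm = 0 by exact: Dminus_lake.
have Dp0 : Dp = 0 by exact: Dplus_lake.
split; last split=> //; last split=> //.
  rewrite /A Aroe_lake //; apply: lake_mx_diagonalizable.
  by rewrite mulr_gt0 // /avg; lra.
move=> P d Punit Adiag Q.
have Qdu0 : Q *m du = 0.
  rewrite /Q /Qroe_of -!scalemxAl mulmx_diag_norm_eq0 ?scaler0 // -Adiag.
  exact: Aroe_lake_jump.
split=> [//||alpha -> Qa]; first by rewrite -mulmxA Qdu0 mulmx0.
have -> : Qa *m du = 0 by rewrite /Qa scale0r add0r subr0 scale1r.
by rewrite Dm0 Dp0 addr0 subr0.
Qed.
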